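(* For every positive integer $n$, $$b^{2}_{3,4}(2n)\equiv b_{3,4}(n)\pmod 4.$$
   Context: For integers $r\ge1$ write $f_r=\prod_{j\ge1}(1-q^{rj})$. For coprime positive integers $\ell,m$ and a positive integer $k$, $b^{k}_{\ell,m}(n)$ denotes the number of $k$-colored partitions of $n$ into parts not divisible by $\ell$ or by $m$; equivalently $\sum_{n\ge0} b^{k}_{\ell,m}(n)q^n=\dfrac{f_\ell^k f_m^k}{f_1^k f_{\ell m}^k}$. Also $b_{\ell,m}(n)=b^{1}_{\ell,m}(n)$ is the number of (uncolored) partitions of $n$ into parts not divisible by $\ell$ or $m$, so $\sum_{n\ge0}b_{3,4}(n)q^n=\dfrac{f_3f_4}{f_1f_{12}}$ and $\sum_{n\ge0}b^2_{3,4}(n)q^n=\dfrac{f_3^2f_4^2}{f_1^2f_{12}^2}$. *)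

From mathcomp Require Import all_boot.
Set Implicit Arguments. Unset Strict Implicit. Unset Printing Implicit Defensive.

(* A k-colored partition of n is encoded by its multiplicity function:
   f (j, c) = number of parts of size j carrying colour c.
   Since every part is >= 1, parts and multiplicities are <= n, so the
   domain 'I_n.+1 * 'I_k and codomain 'I_n.+1 lose nothing. *)
Definition colored_partition_restricted (k l m n : nat)
    (f : {ffun 'I_n.+1 * 'I_k -> 'I_n.+1}) : bool :=
  [forall p : 'I_n.+1 * 'I_k,
     ((p.1 == 0 :> nat) || (l %| p.1) || (m %| p.1)) ==> (f p == 0 :> nat)]
  && (\sum_(p : 'I_n.+1 * 'I_k) p.1 * f p == n).

Definition bk (k l m n : nat) : nat :=
  #|[pred f : {ffun 'I_n.+1 * 'I_k -> 'I_n.+1} |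
        @colored_partition_restricted k l m n f]|.

Definition b (l m n : nat) : nat := bk 1 l m n.

From mathcomp Require Import all_boot all_algebra.
From mathcomp Require Import ring zify.
Set Implicit Arguments. Unset Strict Implicit. Unset Printing Implicit Defensive.
Import GRing.Theory.
Local Open Scope ring_scope.

(* A part size avoids 3 and 4 iff it is prime to 6 or twice a number prime to 6, so
   the generating function of b_{3,4} is G = 1/(A(q) A(q^2)) with
   A(q) = prod_{(i,6)=1} (1 - q^i).  Put P(q) = A(-q) = prod (1 + q^i); then A P = A(q^2).
   Modulo 4, P^2 = A^2 (only the odd part of P changes sign), and the even part of P^2
   is P, by the Frobenius congruence f(q)^2 = f(q^2) mod 2 applied to the odd part of P.
   Since G^2 A(q^2)^4 = P^2, taking even parts gives E A^4 = P mod 4, where E(q^2) is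
   the even part of G^2; hence E = P / A^4 = 1 / (A^2 P) = G mod 4.
   Power series are represented by polynomials, compared modulo 4 and modulo a power
   of X beyond the coefficients of interest. *)

Definition eq_mod4X (M : nat) (p q : {poly int}) : Prop :=
  forall i, (i < M)%N -> (4 %| (p - q)`_i)%Z.

Section CongruenceMod4X.
Variable M : nat.

Lemma eq_mod4X_refl p : eq_mod4X M p p.
Proof. by move=> i _; rewrite subrr coef0 dvdz0. Qed.

Lemma eq_mod4X_sym p q : eq_mod4X M p q -> eq_mod4X M q p.
Proof. by move=> hpq i hi; rewrite -opprB coefN rpredN hpq. Qed.

Lemma eq_mod4X_trans p q r : eq_mod4X M p q -> eq_mod4X M q r -> eq_mod4X M p r.
Proof.
move=> hpq hqr i hi.
by rewrite -[p - r](subrKA q) coefD rpredD ?hpq ?hqr.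
Qed.

Lemma eq_mod4X_mulr p q r : eq_mod4X M p q -> eq_mod4X M (p * r) (q * r).
Proof.
move=> hpq i hi; rewrite -mulrBl coefM; apply: rpred_sum => j _.
by apply/dvdz_mulr/hpq; apply: leq_ltn_trans hi; rewrite -ltnS.
Qed.

Lemma eq_mod4X_mul p q p' q' :
  eq_mod4X M p q -> eq_mod4X M p' q' -> eq_mod4X M (p * p') (q * q').
Proof.
move=> hpq hpq'; apply: eq_mod4X_trans (eq_mod4X_mulr p' hpq) _.
by rewrite ![q * _]mulrC; apply: eq_mod4X_mulr.
Qed.

Lemma eq_mod4X_exp p q k : eq_mod4X M p q -> eq_mod4X M (p ^+ k) (q ^+ k).
Proof.
move=> hpq; elim: k => [|k IHk]; first exact: eq_mod4X_refl.
by rewrite !exprS; apply: eq_mod4X_mul.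
Qed.

Lemma eq_mod4X_prod1 (I : Type) (r : seq I) (P : pred I) (F : I -> {poly int}) :
  (forall i, P i -> eq_mod4X M (F i) 1) -> eq_mod4X M (\prod_(i <- r | P i) F i) 1.
Proof.
move=> hF; apply: (big_ind (fun x => eq_mod4X M x 1)) => //.
- exact: eq_mod4X_refl.
- by move=> x y hx hy; rewrite -(mulr1 1); apply: eq_mod4X_mul.
Qed.

Lemma eq_mod4X_cancel u v p q :
  eq_mod4X M (u * v) 1 -> eq_mod4X M (p * u) (q * u) -> eq_mod4X M p q.
Proof.
move=> huv hpq.
have hv x : eq_mod4X M (x * u * v) x.
  by rewrite -mulrA -[X in eq_mod4X _ _ X]mulr1; apply/eq_mod4X_mul/huv/eq_mod4X_refl.
exact: eq_mod4X_trans (eq_mod4X_sym (hv p)) (eq_mod4X_trans (eq_mod4X_mulr v hpq) (hv q)).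
Qed.

Lemma eq_mod4X_mulXn p q s : p - q = s * 'X^M -> eq_mod4X M p q.
Proof. by move=> hpq i hi; rewrite hpq coefMXn hi dvdz0. Qed.

Lemma eq_mod4X_1subXn j : (M <= j)%N -> eq_mod4X M (1 - 'X^j) 1.
Proof.
move=> hj; apply: (eq_mod4X_mulXn (s := - 'X^(j - M))).
by rewrite mulNr -exprD subnK // addrAC subrr add0r.
Qed.

Lemma eq_mod4X_mul4 p q r : p - q = 4 * r -> eq_mod4X M p q.
Proof.
move=> hpq i _; rewrite hpq mulr_natl coefMn.
by apply/dvdzP; exists r`_i; rewrite mulr_natr.
Qed.

End CongruenceMod4X.

Lemma eq_mod4X_le M M' p q : (M' <= M)%N -> eq_mod4X M p q -> eq_mod4X M' p q.
Proof. by move=> hM hpq i hi; apply/hpq/leq_trans/hM. Qed.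

Lemma eq_mod4X_even M K p q : (K.*2 <= M.+1)%N ->
  eq_mod4X M p q -> eq_mod4X K (even_poly p) (even_poly q).
Proof.
move=> hK hpq i hi; rewrite coefB !coef_even_poly -coefB; apply: hpq.
by rewrite -!muln2 in hK *; lia.
Qed.

Section GeneratingPolynomial.
Variables l m : nat.

Definition excluded_part (i : nat) : bool := (i == 0)%N || (l %| i)%N || (m %| i)%N.

(* Excluded sizes contribute the series 1, written as a sum over multiplicities so
   that expanding the product enumerates exactly the multiplicity functions of [bk]. *)
Definition part_term (i j : nat) : {poly int} :=
  if excluded_part i then (j == 0)%N%:R else 'X^(i * j).

Definition part_series (N i : nat) : {poly int} := \sum_(j < N.+1) part_term i j.

Definition gen_poly (N : nat) : {poly int} := \prod_(i < N.+1) part_series N i.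

Definition denom (L : nat) : {poly int} :=
  \prod_(0 <= i < L | ~~ excluded_part i) (1 - 'X^i).

Lemma prod_part_term k N (f : {ffun 'I_N.+1 * 'I_k -> 'I_N.+1}) :
  \prod_(p : 'I_N.+1 * 'I_k) part_term p.1 (f p)
  = if [forall p : 'I_N.+1 * 'I_k, excluded_part p.1 ==> (f p == 0 :> nat)]
    then 'X^(\sum_(p : 'I_N.+1 * 'I_k) p.1 * f p) else 0.
Proof.
case: ifP => [/forallP hf | /negbT].
  rewrite -prodrXr; apply: eq_bigr => p _; rewrite /part_term.
  by case: ifP => // hp; move/implyP/(_ hp)/eqP: (hf p) => ->; rewrite muln0.
rewrite negb_forall => /existsP [p]; rewrite negb_imply => /andP [hp /negbTE hf].
by rewrite (bigD1 p) //= /part_term hp hf mul0r.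
Qed.

Lemma bk_coef_gen_poly k N : (bk k l m N)%:R = (gen_poly N ^+ k)`_N :> int.
Proof.
have -> : gen_poly N ^+ k = \prod_(p : 'I_N.+1 * 'I_k) part_series N p.1.
  rewrite -(pair_bigA _ (fun (i : 'I_N.+1) (_ : 'I_k) => part_series N i)) /=.
  by rewrite -prodrXl; apply: eq_bigr => i _; rewrite prodr_const card_ord.
rewrite (bigA_distr_bigA (fun (p : 'I_N.+1 * 'I_k) (j : 'I_N.+1) => part_term p.1 j)).
rewrite coef_sum.
under eq_bigr do rewrite prod_part_term.
rewrite /bk -sum1_card natr_sum big_mkcond /=; apply: eq_bigr => f _.
rewrite inE /colored_partition_restricted.
rewrite (fun_if (fun p : {poly int} => p`_N)) coef0 coefXn.
by case: [forall _, _]; rewrite //= eq_sym; case: eqP.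
Qed.

Lemma part_series_mul_1subXn N i : ~~ excluded_part i ->
  eq_mod4X N.+1 (part_series N i * (1 - 'X^i)) 1.
Proof.
move=> hi; have i_gt0 : (0 < i)%N by case: (i) hi.
have -> : part_series N i = \sum_(j < N.+1) 'X^i ^+ j.
  by apply: eq_bigr => j _; rewrite /part_term (negbTE hi) exprM.
have -> : (\sum_(j < N.+1) 'X^i ^+ j) * (1 - 'X^i) = 1 - 'X^i ^+ N.+1 :> {poly int}.
  by rewrite -[RHS]opprB subrX1; ring.
rewrite -exprM.
by apply: eq_mod4X_1subXn; rewrite leq_pmull.
Qed.

Lemma gen_poly_mul_denom N L : (N < L)%N -> eq_mod4X N.+1 (gen_poly N * denom L) 1.
Proof.
move=> hNL; rewrite /denom (big_cat_nat _ (n := N.+1)) //= mulrA.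
rewrite -[X in eq_mod4X _ _ X](mulr1 1); apply: eq_mod4X_mul.
  rewrite big_mkord big_mkcond -big_split /=; apply: eq_mod4X_prod1 => i _.
  case: ifP => [hi | /negbFE hi]; first exact: part_series_mul_1subXn.
  rewrite mulr1 /part_series big_ord_recl big1 => [|j _]; last first.
    by rewrite /part_term hi.
  by rewrite /part_term hi addr0; apply: eq_mod4X_refl.
rewrite big_nat_cond; apply: eq_mod4X_prod1 => i /andP [/andP [hi _] _].
exact: eq_mod4X_1subXn.
Qed.

End GeneratingPolynomial.

Section EvenOddParts.
Variable R : comNzRingType.
Implicit Types p r : {poly R}.

Lemma even_poly_comp_sqrX r : even_poly (r \Po 'X^2) = r.
Proof.
apply/polyP => i; rewrite coef_even_poly coef_comp_poly_Xn //.
by rewrite -muln2 dvdn_mull // mulnK.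
Qed.

Lemma odd_poly_comp_sqrX r : odd_poly (r \Po 'X^2) = 0.
Proof.
apply/polyP => i; rewrite coef_odd_poly coef_comp_poly_Xn // coef0.
by rewrite dvdn2 /= odd_double.
Qed.

Lemma comp_sqrX_inj : injective (fun r : {poly R} => r \Po 'X^2).
Proof. exact: can_inj even_poly_comp_sqrX. Qed.

Lemma even_polyM_comp_sqrX p r : even_poly (p * (r \Po 'X^2)) = even_poly p * r.
Proof.
rewrite -{1}(poly_even_odd p) mulrDl mulrAC -!comp_polyM.
by rewrite even_polyD even_polyMX !(even_poly_comp_sqrX, odd_poly_comp_sqrX) mul0r addr0.
Qed.

Lemma comp_sqrX_opp r : (r \Po 'X^2) \Po - 'X = r \Po 'X^2.
Proof. by rewrite -comp_polyA comp_Xn_poly sqrrN. Qed.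

Lemma comp_opp_even_odd p :
  p \Po - 'X = even_poly p \Po 'X^2 - (odd_poly p \Po 'X^2) * 'X.
Proof.
rewrite -{1}(poly_even_odd p) comp_polyD comp_polyM comp_polyX.
by rewrite !comp_sqrX_opp mulrN.
Qed.

Lemma comp_1subXn_sqrX i : (1 - 'X^i) \Po 'X^2 = 1 - 'X^i ^+ 2 :> {poly R}.
Proof. by rewrite comp_polyB comp_Xn_poly -!exprM mulnC comp_polyC. Qed.

Lemma prod_1subXn_mul_1addXn (r : seq nat) (P : pred nat) :
  (\prod_(i <- r | P i) (1 - 'X^i)) * \prod_(i <- r | P i) (1 + 'X^i)
  = (\prod_(i <- r | P i) (1 - 'X^i)) \Po 'X^2 :> {poly R}.
Proof.
rewrite -big_split rmorph_prod; apply: eq_bigr => i _ /=.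
by rewrite comp_1subXn_sqrX; ring.
Qed.

Lemma comp_opp_prod_1addXn (r : seq nat) (P : pred nat) : (forall i, P i -> odd i) ->
  (\prod_(i <- r | P i) (1 + 'X^i)) \Po - 'X = \prod_(i <- r | P i) (1 - 'X^i) :> {poly R}.
Proof.
move=> hodd; rewrite rmorph_prod; apply: eq_bigr => i /hodd hi /=.
by rewrite comp_polyD comp_polyC comp_Xn_poly exprNn -signr_odd hi expr1 mulN1r.
Qed.

End EvenOddParts.

Lemma sqr_sub_comp_sqrX_even (p : {poly int}) : exists r, p ^+ 2 - (p \Po 'X^2) = 2 * r.
Proof.
elim/poly_ind: p => [|p c [r hr]].
  by exists 0; rewrite comp_poly0 expr0n subrr mulr0.
have [k hk] : exists k, c ^+ 2 - c = 2 * k.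
  (* c = 2a + e with e = 0, 1 gives c^2 - c = 2 a (2a + 2e - 1) *)
  by exists ((c %/ 2)%Z * (2 * (c %/ 2)%Z + 2 * (c %% 2)%Z - 1)); rewrite expr2; nia.
have hc : c%:P ^+ 2 - c%:P = 2 * k%:P :> {poly int}.
  by rewrite -rmorphXn -rmorphB hk rmorphM /= polyC_natr.
exists ('X^2 * r + c%:P * p * 'X + k%:P).
have -> : (p * 'X + c%:P) ^+ 2 - ((p * 'X + c%:P) \Po 'X^2)
  = 'X^2 * (p ^+ 2 - (p \Po 'X^2)) + 2 * c%:P * p * 'X + (c%:P ^+ 2 - c%:P).
  by rewrite comp_poly_MXaddC; ring.
by rewrite hr hc; ring.
Qed.

Lemma sqr_sub_sqr_comp_opp (p : {poly int}) :
  exists r, p ^+ 2 - (p \Po - 'X) ^+ 2 = 4 * r.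
Proof.
have hp := poly_even_odd p; have hm := comp_opp_even_odd p.
set E := even_poly p in hp hm *; set O := odd_poly p in hp hm *.
exists ((E \Po 'X^2) * (O \Po 'X^2) * 'X).
by rewrite hm -{1}hp; ring.
Qed.

Lemma even_poly_sqr_mod4 (p : {poly int}) :
  (p \Po - 'X) * p = (p \Po - 'X) \Po 'X^2 -> exists r, even_poly (p ^+ 2) - p = 4 * r.
Proof.
move=> hp2; have hp := poly_even_odd p; have hm := comp_opp_even_odd p.
set E := even_poly p in hp hm *; set O := odd_poly p in hp hm *.
have he : even_poly (p ^+ 2) = E ^+ 2 + 'X * O ^+ 2.
  have -> : p ^+ 2 = (E ^+ 2 + 'X * O ^+ 2) \Po 'X^2
                     + (((E * O) \Po 'X^2) * 'X + ((E * O) \Po 'X^2) * 'X).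
    by rewrite -{1}hp !expr2 comp_polyD !comp_polyM comp_polyX; ring.
  by rewrite !even_polyD even_polyMX odd_poly_comp_sqrX even_poly_comp_sqrX mul0r !addr0.
have hE2 : E ^+ 2 = E \Po 'X^2 - (O \Po 'X^2) * 'X + 'X * O ^+ 2.
  have : p \Po - 'X = E ^+ 2 - 'X * O ^+ 2.
    apply: comp_sqrX_inj; rewrite /= -hp2 hm -hp !expr2 comp_polyB !comp_polyM.
    by rewrite comp_polyX; ring.
  by rewrite hm => ->; ring.
have [s hs] := sqr_sub_comp_sqrX_even O.
have hO : O ^+ 2 = 2 * s + (O \Po 'X^2) by rewrite -hs subrK.
by exists ('X * s); rewrite he hE2 -hp hO; ring.
Qed.

Lemma prod_nat_double (R : comPzSemiRingType) m (F : nat -> R) :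
  \prod_(0 <= i < m.*2) F i = \prod_(0 <= i < m) F i.*2 * \prod_(0 <= i < m) F i.*2.+1.
Proof.
elim: m => [|m IHm]; first by rewrite !big_geq ?mulr1.
by rewrite doubleS !big_nat_recr //= IHm -mulrA mulrACA.
Qed.

Lemma coprime6E i : coprime i 6 = odd i && ~~ (3 %| i)%N.
Proof. by rewrite (coprimeMr i 2 3) coprimen2 coprime_sym prime_coprime. Qed.

Definition minus_prod (L : nat) : {poly int} := \prod_(0 <= i < L | coprime i 6) (1 - 'X^i).
Definition plus_prod (L : nat) : {poly int} := \prod_(0 <= i < L | coprime i 6) (1 + 'X^i).

Lemma eq_mod4X_denom34 m :
  eq_mod4X m.*2 (denom 3 4 m.*2) (minus_prod m.*2 * (minus_prod m.*2 \Po 'X^2)).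
Proof.
pose odd_factors : {poly int} :=
  \prod_(0 <= i < m) (if coprime i.*2.+1 6 then 1 - 'X^(i.*2.+1) else 1).
pose even_factors : {poly int} :=
  \prod_(0 <= i < m) (if coprime i 6 then 1 - 'X^(i.*2) else 1).
have hD : denom 3 4 m.*2 = even_factors * odd_factors.
  rewrite /denom big_mkcond prod_nat_double.
  by congr (_ * _); apply: eq_bigr => i _; rewrite coprime6E /excluded_part;
    congr (if _ then _ else _); apply/idP/idP; lia.
have hA : minus_prod m.*2 = odd_factors.
  rewrite /minus_prod big_mkcond prod_nat_double big1 ?mul1r // => i _.
  by rewrite coprime6E odd_double.
have hB : eq_mod4X m.*2 (minus_prod m.*2 \Po 'X^2) even_factors.
  have hm : (m <= m.*2)%N by rewrite -addnn leq_addr.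
  rewrite /minus_prod rmorph_prod (big_cat_nat (leq0n m) hm) /=.
  rewrite -[X in eq_mod4X _ _ X]mulr1; apply: eq_mod4X_mul.
    rewrite big_mkcond; under eq_bigr do rewrite comp_1subXn_sqrX -exprM muln2.
    exact: eq_mod4X_refl.
  rewrite big_nat_cond; apply: eq_mod4X_prod1 => i /andP [/andP [hi _] _].
  by rewrite comp_1subXn_sqrX -exprM; apply: eq_mod4X_1subXn; rewrite -muln2 in hi *; lia.
rewrite hD mulrC {1}hA; apply: eq_mod4X_mul; [exact: eq_mod4X_refl | exact: eq_mod4X_sym].
Qed.

Lemma comp_opp_plus_prod L : plus_prod L \Po - 'X = minus_prod L.
Proof. by apply: comp_opp_prod_1addXn => i; rewrite coprime6E => /andP []. Qed.

Lemma minus_prod_mul_plus_prod L : minus_prod L * plus_prod L = minus_prod L \Po 'X^2.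
Proof. exact: prod_1subXn_mul_1addXn. Qed.

Lemma gen_poly34_mul_minus_prod N m : (N < m.*2)%N ->
  eq_mod4X N.+1 (gen_poly 3 4 N * (minus_prod m.*2 * (minus_prod m.*2 \Po 'X^2))) 1.
Proof.
move=> hN; apply: eq_mod4X_trans (gen_poly_mul_denom 3 4 hN).
apply: eq_mod4X_mul; first exact: eq_mod4X_refl.
exact/eq_mod4X_sym/(eq_mod4X_le hN)/eq_mod4X_denom34.
Qed.

Lemma even_poly_gen_poly34_sqr_mul n :
  eq_mod4X n.+1 (even_poly (gen_poly 3 4 (2 * n) ^+ 2) * minus_prod (n.+1).*2 ^+ 4)
    (plus_prod (n.+1).*2).
Proof.
set G := gen_poly 3 4 (2 * n); set P := plus_prod (n.+1).*2; set A := minus_prod (n.+1).*2.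
have hAP : A * P = A \Po 'X^2 by apply: minus_prod_mul_plus_prod.
have [r hr] : exists r, even_poly (P ^+ 2) - P = 4 * r.
  by apply: even_poly_sqr_mod4; rewrite comp_opp_plus_prod.
have hG : eq_mod4X (2 * n).+1 (G * (A * (A * P))) 1.
  by rewrite hAP; apply: gen_poly34_mul_minus_prod; lia.
have hG2 : eq_mod4X (2 * n).+1 (G ^+ 2 * (A ^+ 4 \Po 'X^2)) (P ^+ 2).
  have -> : G ^+ 2 * (A ^+ 4 \Po 'X^2) = (G * (A * (A * P))) ^+ 2 * P ^+ 2.
    by rewrite rmorphXn /= -hAP; ring.
  rewrite -[X in eq_mod4X _ _ X]mul1r -(expr1n _ 2).
  by apply: eq_mod4X_mul; [exact: eq_mod4X_exp | exact: eq_mod4X_refl].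
rewrite -even_polyM_comp_sqrX; apply: eq_mod4X_trans (eq_mod4X_mul4 hr).
by apply: eq_mod4X_even hG2; lia.
Qed.

Lemma even_poly_gen_poly34_sqr n :
  eq_mod4X n.+1 (even_poly (gen_poly 3 4 (2 * n) ^+ 2)) (gen_poly 3 4 n).
Proof.
have hE := @even_poly_gen_poly34_sqr_mul n.
set E := even_poly _ in hE *; set Q := gen_poly 3 4 n.
set P := plus_prod (n.+1).*2 in hE *; set A := minus_prod (n.+1).*2 in hE *.
have [r hr] : exists r, P ^+ 2 - A ^+ 2 = 4 * r.
  by rewrite /A -comp_opp_plus_prod; apply: sqr_sub_sqr_comp_opp.
have hQ : eq_mod4X n.+1 (A ^+ 2 * (P * Q)) 1.
  have -> : A ^+ 2 * (P * Q) = Q * (A * (A * P)) by ring.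
  by rewrite minus_prod_mul_plus_prod; apply: gen_poly34_mul_minus_prod; lia.
have hEunit : eq_mod4X n.+1 (E * (A ^+ 2 * P)) 1.
  apply: (eq_mod4X_cancel hQ); rewrite mul1r.
  have -> : E * (A ^+ 2 * P) * A ^+ 2 = E * A ^+ 4 * P by ring.
  apply: eq_mod4X_trans (eq_mod4X_mulr P hE) _.
  by rewrite -expr2; apply: eq_mod4X_mul4 hr.
apply: (eq_mod4X_cancel (u := A ^+ 2 * P) (v := Q)); first by rewrite -mulrA; apply: hQ.
by apply: eq_mod4X_trans hEunit (eq_mod4X_sym _); rewrite mulrC -mulrA.
Qed.

Local Close Scope ring_scope.

Theorem mainTheorem3 (n : nat) : 0 < n -> bk 2 3 4 (2 * n) = b 3 4 n %[mod 4].
Proof.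
move=> _; have := even_poly_gen_poly34_sqr (ltnSn n).
rewrite coefB coef_even_poly -mul2n -bk_coef_gen_poly.
rewrite -[gen_poly 3 4 n]expr1 -bk_coef_gen_poly.
by rewrite !natz -eqz_mod_dvd !modz_nat => /eqP [].
Qed.
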